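(* Let $G$ be a finite non-abelian group with $G/Z(G)\cong\mathbb{Z}_p\times\mathbb{Z}_p$ for a prime $p$. Then $\Gamma_G$ is neither hyperenergetic, L-hyperenergetic nor Q-hyperenergetic.
   Context: The NCCC-graph $\Gamma_G$ of a finite non-abelian group $G$ with center $Z(G)$ has vertex set $\{x^G: x\in G\setminus Z(G)\}$ ($x^G$ the conjugacy class of $x$), distinct vertices $x^G,y^G$ adjacent iff $x'y'\neq y'x'$ for all $x'\in x^G,y'\in y^G$. For a simple graph $\mathcal G$ with adjacency matrix $A$, degree matrix $D$, $L=D-A$, $Q=D+A$: $E(\mathcal G)=\sum|\lambda|$ over eigenvalues of $A$; with $\Delta=2|E(\mathcal G)|/|V(\mathcal G)|$, $LE(\mathcal G)=\sum|\beta-\Delta|$ over eigenvalues $\beta$ of $L$, $SE(\mathcal G)=\sum|\gamma-\Delta|$ over eigenvalues $\gamma$ of $Q$ (with multiplicity). For $N=|V(\mathcal G)|$ and $K_N$ the complete graph, $E(K_N)=LE(K_N)=SE(K_N)=2(N-1)$. $\mathcal G$ is hyperenergetic if $E(\mathcal G)>E(K_N)$, L-hyperenergetic if $LE(\mathcal G)>LE(K_N)$, Q-hyperenergetic if $SE(\mathcal G)>SE(K_N)$. *)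

From mathcomp Require Import all_boot all_order all_algebra all_fingroup all_solvable all_field.
Set Implicit Arguments. Unset Strict Implicit. Unset Printing Implicit Defensive.
Import Order.TTheory GRing.Theory Num.Theory.
Local Open Scope ring_scope.

(* the eigenvalues (with algebraic multiplicity) of A: the roots of its
   characteristic polynomial, which splits over the algebraically closed algC *)
Definition spectrum (N : nat) (A : 'M[algC]_N) : seq algC :=
  sval (closed_field_poly_normal (char_poly A)).

Definition deg_mx (N : nat) (A : 'M[algC]_N) : 'M[algC]_N :=
  diag_mx (\row_i \sum_j A i j).

Definition lap_mx (N : nat) (A : 'M[algC]_N) := deg_mx A - A.
Definition slap_mx (N : nat) (A : 'M[algC]_N) := deg_mx A + A.

(* average degree  Delta = 2|E| / |V| = (sum of degrees) / N *)
Definition avg_deg (N : nat) (A : 'M[algC]_N) : algC :=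
  (\sum_i \sum_j A i j) / N%:R.

Definition energy (N : nat) (A : 'M[algC]_N) : algC :=
  \sum_(l <- spectrum A) `|l|.
Definition lap_energy (N : nat) (A : 'M[algC]_N) : algC :=
  \sum_(b <- spectrum (lap_mx A)) `|b - avg_deg A|.
Definition slap_energy (N : nat) (A : 'M[algC]_N) : algC :=
  \sum_(g <- spectrum (slap_mx A)) `|g - avg_deg A|.

Definition complete_adj (N : nat) : 'M[algC]_N := \matrix_(i, j) (i != j)%:R.

Definition hyperenergetic (N : nat) (A : 'M[algC]_N) :=
  energy (complete_adj N) < energy A.
Definition L_hyperenergetic (N : nat) (A : 'M[algC]_N) :=
  lap_energy (complete_adj N) < lap_energy A.
Definition Q_hyperenergetic (N : nat) (A : 'M[algC]_N) :=
  slap_energy (complete_adj N) < slap_energy A.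

Section NCCC.
Variables (gT : finGroupType) (G : {group gT}).

Definition nccc_vertices : {set {set gT}} :=
  [set C in classes G | ~~ (C \subset 'Z(G))]%g.

Definition nccc_N : nat := #|nccc_vertices|.

Definition nccc_vertex (i : 'I_nccc_N) : {set gT} := enum_val i.

Definition nccc_adj (i j : 'I_nccc_N) : bool :=
  (i != j) &&
  [forall x in nccc_vertex i, forall y in nccc_vertex j, x * y != y * x]%g.

Definition nccc_adj_mx : 'M[algC]_nccc_N :=
  \matrix_(i, j) (nccc_adj i j)%:R.
End NCCC.

(* Since [G / Z(G)] has order [p^2], the centraliser [C_G(x)] of a non-central [x]
   has index [p] over [Z(G)] and in [G]; it contains [G' <= Z(G)], hence is normal,
   so conjugate elements, and also commuting non-central elements, have the same
   centraliser.  Two non-central classes are therefore adjacent in the NCCC-graph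
   exactly when their centralisers differ: the graph is complete multipartite with
   [N] vertices and all parts of the same size [m = (p - 1)|Z(G)| / p >= 1].
   Its adjacency matrix [A] is real symmetric with [A (A + m) (A - (N - m)) = 0],
   [tr A = 0] and [tr A^2 = N (N - m)], which forces the energy to be [2 (N - m)],
   at most [2 (N - 1) = E(K_N)]; and since the graph is [(N - m)]-regular its
   Laplacian and signless Laplacian energies equal its energy. *)

From mathcomp Require Import all_boot all_order all_algebra all_fingroup all_solvable all_field.
From mathcomp Require Import ring.
Set Implicit Arguments. Unset Strict Implicit. Unset Printing Implicit Defensive.
Import Order.TTheory GRing.Theory Num.Theory.

Lemma prime_sq_factor p s t : prime p -> s * t = p ^ 2 -> s != 1 -> t != 1 -> s = p.
Proof.
move=> p_pr st_p2 s_neq1 t_neq1; have p_gt0 := prime_gt0 p_pr.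
have /(dvdn_pfactor _ _ p_pr) [k k_le2 sE] : s %| p ^ 2 by rewrite -st_p2 dvdn_mulr.
move: k_le2 s_neq1 st_p2; rewrite {}sE; case: k => [|[|[|k]]] //= _ _ /eqP.
by rewrite -{2}(muln1 (p ^ 2)) eqn_pmul2l ?expn_gt0 ?p_gt0 // => /eqP t1; rewrite t1 in t_neq1.
Qed.

Lemma prime_factor1 p s t : prime p -> s * t = p -> t != 1 -> s = 1.
Proof.
move=> p_pr st_p t_neq1.
have /(prime_nt_dvdP p_pr t_neq1) tE : t %| p by rewrite -st_p dvdn_mull.
by apply/eqP; rewrite -(eqn_pmul2r (prime_gt0 p_pr)) mul1n -{2}st_p tE.
Qed.

Section CentralQuotientP2.
Open Scope group_scope.
Variables (gT : finGroupType) (G : {group gT}) (p : nat).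
Hypotheses (p_pr : prime p) (isoGZ : G / 'Z(G) \isog setX (Zp p) (Zp p)).
Local Notation Z := 'Z(G).

Lemma indexg_center : #|G : Z| = (p ^ 2)%N.
Proof.
rewrite -card_quotient ?normal_norm ?center_normal //.
by rewrite (card_isog isoGZ) cardsX card_Zp ?prime_gt0 // mulnn.
Qed.

Lemma der1_sub_center : G^`(1) \subset Z.
Proof.
apply: der1_min; first by rewrite normal_norm ?center_normal.
apply: (card_p2group_abelian p_pr).
by rewrite card_quotient ?normal_norm ?center_normal // indexg_center.
Qed.

Lemma center_sub_cent1 x : x \in G -> Z \subset 'C_G[x].
Proof.
move=> xG; rewrite subsetI center_sub sub_cent1.
by apply: subsetP xG; rewrite centsC subsetIr.
Qed.

Lemma cent1_normal x : x \in G -> 'C_G[x] <| G.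
Proof.
move=> xG; apply: sub_der1_normal (subcent1_sub x G).
exact: subset_trans der1_sub_center (center_sub_cent1 xG).
Qed.

Lemma cent1_conjg x g : x \in G -> g \in G -> 'C_G[x ^ g] = 'C_G[x].
Proof.
move=> xG gG; have /normalP [_ nCG] := cent1_normal xG.
by rewrite cent1J -{1}(conjGid gG) -conjIg nCG.
Qed.

Lemma indexg_cent1_center x : x \in G -> x \notin Z -> #|'C_G[x] : Z| = p.
Proof.
move=> xG xZ; have := Lagrange_index (subcent1_sub x G) (center_sub_cent1 xG).
rewrite indexg_center mulnC => /prime_sq_factor; apply => //.
- by rewrite indexg_eq1; apply: contra xZ => /subsetP; apply; apply: subcent1_id.
- rewrite indexg_eq1; apply: contra xZ => /subsetP sGC; apply/centerP.
  by split=> // y /sGC /subcent1P [_ /commute_sym].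
Qed.

Lemma indexg_cent1 x : x \in G -> x \notin Z -> #|G : 'C_G[x]| = p.
Proof.
move=> xG xZ; apply/eqP; rewrite -(eqn_pmul2r (prime_gt0 p_pr)).
rewrite -{1}(indexg_cent1_center xG xZ) Lagrange_index ?subcent1_sub ?center_sub_cent1 //.
by rewrite indexg_center mulnn.
Qed.

Lemma cent1_eq_commute x y : x \in G -> x \notin Z -> y \in G -> y \notin Z ->
  commute x y -> 'C_G[x] = 'C_G[y].
Proof.
suff sub x' y' : x' \in G -> x' \notin Z -> y' \in G -> commute x' y' ->
    'C_G[x'] \subset 'C_G[y'].
  by move=> xG xZ yG yZ cxy; apply/eqP; rewrite eqEsubset !sub // commute_sym.
move=> xG xZ yG cxy; pose K := ('C_G[x'] :&: 'C_G[y'])%G.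
have ZK : Z \subset K by rewrite subsetI !center_sub_cent1.
have KZ_neq1 : #|K : Z| != 1%N.
  rewrite indexg_eq1; apply: contra xZ => /subsetP; apply.
  by rewrite inE subcent1_id //; apply/subcent1P; split=> //; apply: commute_sym.
have := Lagrange_index (subsetIl _ _ : K \subset 'C_G[x']) ZK.
rewrite indexg_cent1_center // => /(prime_factor1 p_pr)/(_ KZ_neq1)/eqP.
by rewrite indexg_eq1 => /subset_trans; apply; apply: subsetIr.
Qed.

Lemma noncentral_class C x : C \in classes G -> ~~ (C \subset Z) -> x \in C ->
  [/\ x \in G, x \notin Z & 'C_G[x] = 'C_G[repr C]].
Proof.
have nZG : G \subset 'N(Z) by rewrite normal_norm ?center_normal.
case/imsetP => x0 x0G ->; rewrite class_sub_norm // => x0Z /imsetP [g gG ->].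
have /imsetP [h hG ->] := mem_repr _ (class_refl G x0).
by rewrite groupJ // memJ_norm ?(subsetP nZG) // !cent1_conjg.
Qed.

Lemma noncentral_classP x : x \in G -> (x ^: G \subset Z) = (x \in Z).
Proof. by move=> xG; rewrite class_sub_norm // normal_norm ?center_normal. Qed.

Definition nccc_part (i : 'I_(nccc_N G)) : {set gT} := 'C_G[repr (nccc_vertex i)].

Lemma nccc_vertexP (i : 'I_(nccc_N G)) :
  nccc_vertex i \in classes G /\ ~~ (nccc_vertex i \subset Z).
Proof. by have := enum_valP i; rewrite inE => /andP. Qed.

Lemma nccc_adjE (i j : 'I_(nccc_N G)) : nccc_adj i j = (nccc_part i != nccc_part j).
Proof.
have [ci ni] := nccc_vertexP i; have [cj nj] := nccc_vertexP j.
have xi := mem_repr_classes ci; have yj := mem_repr_classes cj.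
apply/andP/idP => [[_ /forall_inP adj] | neq].
  apply: contraTneq (adj _ xi) => eq_part; apply/forall_inP => /(_ _ yj); apply/negP/negPn/eqP.
  have /subcent1P [] // : repr (nccc_vertex j) \in nccc_part i.
  by rewrite eq_part /nccc_part subcent1_id //; case: (noncentral_class cj nj yj).
split; first by apply: contraNneq neq => ->.
apply/forall_inP => x xi'; apply/forall_inP => y yj'; apply/eqP => cxy.
have [xG xZ eCx] := noncentral_class ci ni xi'; have [yG yZ eCy] := noncentral_class cj nj yj'.
by move: neq; rewrite /nccc_part -eCx -eCy (cent1_eq_commute xG xZ yG yZ cxy) eqxx.
Qed.

Lemma cent1_classes_partition x : x \in G -> x \notin Z ->
  partition [set C in nccc_vertices G | 'C_G[repr C] == 'C_G[x]] ('C_G[x] :\: Z).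
Proof.
move=> xG xZ; apply/and3P; split; last by rewrite !inE sub0set andbF.
- apply/eqP/setP => y; apply/bigcupP/setDP
    => [[C /setIdP [/setIdP [cC nC] /eqP eC] yC] | [yC yZ]].
    by have [yG yZ eCy] := noncentral_class cC nC yC; rewrite -eC -eCy subcent1_id.
  have /subcent1P [yG cxy] := yC.
  have nyZ : ~~ (y ^: G \subset Z) by rewrite noncentral_classP.
  exists (y ^: G); last exact: class_refl.
  apply/setIdP; split; first by rewrite inE mem_classes.
  have [_ _ <-] := noncentral_class (mem_classes yG) nyZ (class_refl G y).
  by rewrite (cent1_eq_commute yG yZ xG xZ (commute_sym cxy)).
- apply: trivIsetS (_ : _ \subset classes G) _; last by case/and3P: (classes_partition G).
  by apply/subsetP => C; rewrite !inE => /andP [/andP []].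
Qed.

Lemma card_cent1_classes x : x \in G -> x \notin Z ->
  (#|[set C in nccc_vertices G | 'C_G[repr C] == 'C_G[x]]| * p = p.-1 * #|Z|)%N.
Proof.
move=> xG xZ; have ZC := center_sub_cent1 xG.
have cardC C : C \in [set C in nccc_vertices G | 'C_G[repr C] == 'C_G[x]] -> #|C| = p.
  rewrite !inE => /andP [/andP [/imsetP [y yG ->] nC] _].
  by rewrite -index_cent1 indexg_cent1 // -noncentral_classP.
have := card_partition (cent1_classes_partition xG xZ).
rewrite cardsD (setIidPr ZC) (eq_bigr _ cardC) sum_nat_const => <-.
by rewrite -(Lagrange ZC) indexg_cent1_center // mulnC -subn1 mulnBl mul1n.
Qed.

Lemma card_nccc_part (i : 'I_(nccc_N G)) :
  #|[set j | nccc_part j == nccc_part i]| = (p.-1 * #|Z|)%N %/ p.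
Proof.
have [ci ni] := nccc_vertexP i.
have [xG xZ _] := noncentral_class ci ni (mem_repr_classes ci).
rewrite -(card_cent1_classes xG xZ) mulnK ?prime_gt0 // -!sum1_card.
rewrite (eq_bigl (fun C => (C \in nccc_vertices G) && ('C_G[repr C] == nccc_part i))).
  by rewrite big_enum_val_cond; apply: eq_bigl => j; rewrite inE.
by move=> C; rewrite inE.
Qed.

Lemma nccc_N_gt0 : ~~ abelian G -> 0 < nccc_N G.
Proof.
move=> nabG; have /subsetPn [x xG xZ] : ~~ (G \subset Z).
  by apply: contra nabG => /subset_trans; apply; rewrite subsetIr.
rewrite card_gt0; apply/set0Pn; exists (x ^: G).
by rewrite !inE mem_classes //= noncentral_classP.
Qed.

End CentralQuotientP2.

Local Open Scope ring_scope.

Section Conjugation.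
Variables (F : fieldType) (n : nat).

Lemma char_poly_conjmx (P A : 'M[F]_n) : P \in unitmx -> char_poly (conjmx P A) = char_poly A.
Proof.
move=> Pu; pose Q := map_mx polyC P.
have QA : Q *m char_poly_mx A = char_poly_mx (conjmx P A) *m Q.
  rewrite /char_poly_mx mulmxBr mulmxBl -!map_mxM conjumx // mulmxKV //.
  by rewrite scalar_mxC.
have detQ : \det Q != 0.
  by rewrite det_map_mx polyC_eq0 -unitfE -unitmxE.
by apply: (mulIf detQ); rewrite /char_poly -det_mulmx -QA det_mulmx mulrC.
Qed.

Lemma mxtrace_conjmx (P A : 'M[F]_n) : P \in unitmx -> \tr (conjmx P A) = \tr A.
Proof. by move=> Pu; rewrite conjumx // mxtrace_mulC mulKmx. Qed.

Lemma conjmx_affine (P A : 'M[F]_n) b c : P \in unitmx ->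
  conjmx P (b%:M + c *: A) = b%:M + c *: conjmx P A.
Proof.
move=> Pu; rewrite !conjumx // mulmxDr mulmxDl mul_mx_scalar -scalemxAl mulmxV //.
by rewrite scalemx1 -scalemxAr -scalemxAl.
Qed.

Lemma diag_mx_affine (d : 'rV[F]_n) b c :
  b%:M + c *: diag_mx d = diag_mx (\row_i (b + c * d 0 i)).
Proof.
apply/matrixP => i j; rewrite !mxE.
by case: eqVneq => _; rewrite ?mulr1n ?mulr0n ?mulr0 ?addr0.
Qed.

End Conjugation.

Section Spectrum.
Variable n : nat.
Implicit Types (A B P : 'M[algC]_n) (d : 'rV[algC]_n).

Lemma spectrum_char_poly A : char_poly A = \prod_(z <- spectrum A) ('X - z%:P).
Proof.
rewrite /spectrum; case: closed_field_poly_normal => r /= ->.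
by rewrite (monicP (char_poly_monic A)) scale1r.
Qed.

Lemma char_poly_perm_spectrum A B :
  char_poly A = char_poly B -> perm_eq (spectrum A) (spectrum B).
Proof. by rewrite !spectrum_char_poly => /prod_XsubC_eq. Qed.

Lemma perm_spectrum_conjmx P A : P \in unitmx ->
  perm_eq (spectrum (conjmx P A)) (spectrum A).
Proof. by move=> Pu; rewrite char_poly_perm_spectrum // char_poly_conjmx. Qed.

Lemma perm_spectrum_diag d : perm_eq (spectrum (diag_mx d)) [seq d 0 i | i <- enum 'I_n].
Proof.
apply: prod_XsubC_eq; rewrite -spectrum_char_poly char_poly_trig ?diag_mx_is_trig //.
by rewrite big_map big_enum; apply: eq_bigr => i _; rewrite mxE eqxx.
Qed.

Lemma conjmx_spectral A : A \is normalmx ->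
  conjmx (spectralmx A) A = diag_mx (spectral_diag A).
Proof.
move=> /orthomx_spectralP {2}->; have Pu := spectral_unit A.
by rewrite conjumx // !mulmxA mulmxV // mul1mx mulmxK.
Qed.

Lemma perm_spectrum_normal A : A \is normalmx ->
  perm_eq (spectrum A) [seq spectral_diag A 0 i | i <- enum 'I_n].
Proof.
move=> An; apply: perm_trans (perm_spectrum_diag _).
by rewrite -conjmx_spectral // perm_sym perm_spectrum_conjmx // spectral_unit.
Qed.

Lemma big_spectrum_affine A b c (f : algC -> algC) : A \is normalmx ->
  \sum_(l <- spectrum (b%:M + c *: A)) f l = \sum_(l <- spectrum A) f (b + c * l).
Proof.
move=> An; set P := spectralmx A; set d := spectral_diag A.
have Pu : P \in unitmx := spectral_unit A.
have -> : b%:M + c *: A = conjmx (invmx P) (diag_mx (\row_i (b + c * d 0 i))).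
  by rewrite -diag_mx_affine -conjmx_spectral // -conjmx_affine // conjmxK.
rewrite (perm_big _ (perm_spectrum_conjmx _ _)) ?unitmx_inv //.
rewrite (perm_big _ (perm_spectrum_diag _)) (perm_big _ (perm_spectrum_normal An)).
by rewrite !big_map; apply: eq_bigr => i _; rewrite mxE.
Qed.

End Spectrum.

(* [`|x|] agrees with [((m - a) x + 2 x^2) / (m + a)] at the three roots [0], [-m], [a]. *)
Lemma sum_norm_cubic_roots (I : finType) (x : I -> algC) (m a : algC) :
  0 <= m -> 0 <= a -> m + a != 0 -> (forall i, x i * (x i + m) * (x i - a) = 0) ->
  \sum_i x i = 0 -> \sum_i x i ^+ 2 = (m + a) * a ->
  \sum_i `|x i| = 2 * a.
Proof.
move=> m_ge0 a_ge0 ma_neq0 roots sum1 sum2.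
have normE i : `|x i| = ((m - a) * x i + 2 * x i ^+ 2) / (m + a).
  have /eqP := roots i; rewrite !mulf_eq0 addr_eq0 !subr_eq0 => /orP[/orP[]|] /eqP->.
  - by rewrite normr0 expr2 !mulr0 addr0 mul0r.
  - by rewrite normrN ger0_norm //; field.
  - by rewrite ger0_norm //; field.
under eq_bigr do rewrite normE.
by rewrite -mulr_suml big_split /= -!mulr_sumr sum1 sum2; field.
Qed.

Lemma energy_normal_cubic n (A : 'M[algC]_n) (m a : algC) :
  A \is normalmx -> 0 <= m -> 0 <= a -> m + a = n%:R -> (0 < n)%N ->
  A *m (m%:M + A) *m ((- a)%:M + A) = 0 ->
  \tr A = 0 -> \tr (A *m A) = n%:R * a ->
  energy A = 2 * a.
Proof.
move=> An m_ge0 a_ge0 n_ma n_gt0 cubic trA trA2.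
set P := spectralmx A; set d := spectral_diag A.
have Pu : P \in unitmx := spectral_unit A.
have DE : conjmx P A = diag_mx d := conjmx_spectral An.
have conjM X Y : conjmx P (X *m Y) = conjmx P X *m conjmx P Y.
  by rewrite conjmxM // inE stablemx_unit.
have conj_shift b : conjmx P (b%:M + A) = diag_mx (\row_i (b + d 0 i)).
  rewrite -[A in b%:M + A]scale1r conjmx_affine // DE diag_mx_affine.
  by under eq_mx do rewrite mul1r.
rewrite /energy (perm_big _ (perm_spectrum_normal An)) big_map big_enum /=.
apply: (@sum_norm_cubic_roots _ (d 0) m); rewrite ?n_ma ?pnatr_eq0 -?lt0n //.
- move=> i; have /matrixP/(_ i i) := congr1 (conjmx P) cubic.
  rewrite !conjM conjmx0 DE !conj_shift !mulmx_diag !mxE eqxx !mulr1n.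
  by rewrite [_ + m]addrC [_ - a]addrC => ->.
- by rewrite -mxtrace_diag -DE mxtrace_conjmx.
- rewrite -trA2 -(mxtrace_conjmx _ Pu) conjM DE mulmx_diag mxtrace_diag.
  by apply: eq_bigr => i _; rewrite mxE expr2.
Qed.

Lemma energies_regular n (A : 'M[algC]_n) (r : algC) :
  A \is normalmx -> deg_mx A = r%:M -> avg_deg A = r ->
  lap_energy A = energy A /\ slap_energy A = energy A.
Proof.
move=> An degA avgA; rewrite /lap_energy /slap_energy /lap_mx /slap_mx degA avgA.
have -> : r%:M - A = r%:M + (-1) *: A by rewrite scaleN1r.
have -> : r%:M + A = r%:M + 1 *: A by rewrite scale1r.
rewrite /energy; split; rewrite big_spectrum_affine //; apply: eq_bigr => l _.
  by rewrite mulN1r addrAC subrr add0r normrN.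
by rewrite mul1r addrAC subrr add0r.
Qed.

Section Multipartite.
Variables (N : nat) (T : eqType) (part : 'I_N -> T) (m : nat).
Hypothesis card_part : forall i, #|[set j | part j == part i]| = m.

Definition multipartite_adj : 'M[algC]_N := \matrix_(i, j) (part i != part j)%:R.
Local Notation A := multipartite_adj.
Local Notation a := (N%:R - m%:R : algC).

Lemma sum_same_part i : \sum_j ((part j == part i)%:R : algC) = m%:R.
Proof.
rewrite -(card_part i) -sum1_card natr_sum [RHS]big_mkcond.
by apply: eq_bigr => j _; rewrite inE; case: eqP.
Qed.

Lemma multipartite_adjE i j : A i j = 1 - (part j == part i)%:R.
Proof. by rewrite mxE eq_sym; case: eqP; rewrite ?subrr ?subr0. Qed.

Lemma multipartite_row_sum i : \sum_j A i j = a.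
Proof.
under eq_bigr do rewrite multipartite_adjE.
by rewrite sumrB sum_same_part sumr_const card_ord.
Qed.

Lemma multipartite_normal : A \is normalmx.
Proof.
apply/normalmxP; suff -> : (A ^t* = A)%sesqui by [].
by apply/matrixP => i j; rewrite !mxE conjC_nat eq_sym.
Qed.

Lemma multipartite_deg : deg_mx A = a%:M.
Proof.
rewrite /deg_mx -diag_const_mx; congr diag_mx.
by apply/matrixP => i j; rewrite !mxE multipartite_row_sum.
Qed.

Lemma multipartite_avg_deg : (0 < N)%N -> avg_deg A = a.
Proof.
move=> N_gt0; rewrite /avg_deg; under eq_bigr do rewrite multipartite_row_sum.
by rewrite sumr_const card_ord -[_ *+ N]mulr_natr mulfK // pnatr_eq0 -lt0n.
Qed.

Lemma multipartite_adj_sqr : A *m (m%:R%:M + A) = a *: (const_mx 1 : 'M_N).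
Proof.
apply/matrixP => i j; rewrite mulmxDr mul_mx_scalar !mxE mulr1.
have prodE l : ((part i != part l)%:R * (part l != part j)%:R : algC) =
    1 - (part l == part i)%:R - (part l == part j)%:R
      + (part l == part i)%:R * (part j == part i)%:R.
  have same : (part l == part i) && (part l == part j)
            = (part l == part i) && (part j == part i).
    by have [->|] := eqVneq (part l) (part i); rewrite // eq_sym.
  rewrite [part i == _]eq_sym; move: same.
  by case: (part l == part i); case: (part l == part j); case: (part j == part i)
    => //= _; ring.
under eq_bigr do rewrite !mxE prodE.
rewrite big_split /= !sumrB -mulr_suml !sum_same_part sumr_const card_ord.
by rewrite [part i == _]eq_sym; case: eqP => _ /=; ring.
Qed.

Lemma const_mx_multipartite_adj : const_mx 1 *m A = a *: (const_mx 1 : 'M_N).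
Proof.
apply/matrixP => i j; rewrite !mxE mulr1 -(multipartite_row_sum j).
by apply: eq_bigr => l _; rewrite !mxE mul1r eq_sym.
Qed.

Lemma multipartite_adj_cubic : A *m (m%:R%:M + A) *m ((- a)%:M + A) = 0.
Proof.
rewrite multipartite_adj_sqr -scalemxAl mulmxDr mul_mx_scalar const_mx_multipartite_adj.
by rewrite scaleNr addNr scaler0.
Qed.

Lemma multipartite_trace : \tr A = 0.
Proof. by apply: big1 => i _; rewrite mxE eqxx. Qed.

Lemma multipartite_trace_sqr : \tr (A *m A) = N%:R * a.
Proof.
transitivity (\sum_(i < N) a); last by rewrite sumr_const card_ord mulr_natl.
apply: eq_bigr => i _.
rewrite mxE -(multipartite_row_sum i); apply: eq_bigr => l _.
by rewrite !mxE eq_sym; case: (_ != _); rewrite ?mulr1 ?mulr0.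
Qed.

Lemma multipartite_energies : (0 < N)%N ->
  [/\ energy A = 2 * a, lap_energy A = 2 * a & slap_energy A = 2 * a].
Proof.
move=> N_gt0; have m_le_N : (m <= N)%N.
  by rewrite -(card_part (Ordinal N_gt0)) -[leqRHS]card_ord max_card.
have E : energy A = 2 * a.
  apply: (energy_normal_cubic multipartite_normal _ _ _ N_gt0 multipartite_adj_cubic
    multipartite_trace multipartite_trace_sqr) => //.
  - by rewrite subr_ge0 ler_nat.
  - by rewrite addrC subrK.
have [LE SE] := energies_regular multipartite_normal multipartite_deg
  (multipartite_avg_deg N_gt0).
by rewrite LE SE E.
Qed.

End Multipartite.

Lemma complete_adj_multipartite N : complete_adj N = multipartite_adj (fun i : 'I_N => i).
Proof. by apply/matrixP => i j; rewrite !mxE. Qed.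

Lemma multipartite_not_hyperenergetic N (T : eqType) (part : 'I_N -> T) m :
  (forall i, #|[set j | part j == part i]| = m) -> (0 < N)%N ->
  [/\ ~ hyperenergetic (multipartite_adj part), ~ L_hyperenergetic (multipartite_adj part)
     & ~ Q_hyperenergetic (multipartite_adj part)].
Proof.
move=> card_part N_gt0; pose i0 := Ordinal N_gt0.
have m_gt0 : (0 < m)%N.
  by rewrite -(card_part i0) card_gt0; apply/set0Pn; exists i0; rewrite inE.
have [E L Q] := multipartite_energies card_part N_gt0.
have card1 (i : 'I_N) : #|[set j | j == i]| = 1%N.
  by rewrite -(cards1 i); apply: eq_card => j; rewrite !inE.
have [EK LK QK] := multipartite_energies card1 N_gt0.
have le : 2 * (N%:R - m%:R) <= 2 * (N%:R - 1%:R) :> algC.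
  by rewrite ler_pM2l ?ltr0n // lerD2l lerN2 ler1n.
by rewrite /hyperenergetic /L_hyperenergetic /Q_hyperenergetic complete_adj_multipartite
  E L Q EK LK QK le_gtF.
Qed.

Theorem theorem4p1 (gT : finGroupType) (G : {group gT}) (p : nat) :
  prime p -> ~~ abelian G ->
  (G / 'Z(G))%g \isog setX (Zp p) (Zp p) ->
  ~ hyperenergetic (nccc_adj_mx G) /\
  ~ L_hyperenergetic (nccc_adj_mx G) /\
  ~ Q_hyperenergetic (nccc_adj_mx G).
Proof.
move=> p_pr nabG isoGZ.
have -> : nccc_adj_mx G = multipartite_adj (@nccc_part _ G).
  by apply/matrixP => i j; rewrite !mxE (nccc_adjE p_pr isoGZ).
by case: (multipartite_not_hyperenergetic (card_nccc_part p_pr isoGZ) (nccc_N_gt0 nabG)).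
Qed.
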